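(* Let $Q(u,v)\in\mathbb{Z}[u,v]$ be a quadratic form and let $r\in\mathbb{N}$. Then there are lattices $\Lambda_1,\ldots,\Lambda_N\subseteq\mathbb{Z}^2$ with $N\le 2^{\Omega(r)}$ such that $Q(u,v)\equiv 0\pmod r$ holds for $(u,v)\in\mathbb{Z}^2$ if and only if $(u,v)\in\bigcup_{n=1}^N\Lambda_n$.
   Context: $\Omega(r)$ denotes the number of prime factors of $r$ counted with multiplicity. *)

From mathcomp Require Import all_boot all_order all_algebra.
Set Implicit Arguments. Unset Strict Implicit. Unset Printing Implicit Defensive.
Import Order.TTheory GRing.Theory Num.Theory.

Definition bigOmega (r : nat) : nat := \sum_(p <- primes r) logn p r.

Definition qform (a b c : int) (u v : int) : int :=
  (a * u ^+ 2 + b * u * v + c * v ^+ 2)%R.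

Definition is_lattice (L : int -> int -> Prop) : Prop :=
  L 0%R 0%R /\
  forall u1 v1 u2 v2, L u1 v1 -> L u2 v2 -> L (u1 - u2)%R (v1 - v2)%R.

(* Induct on the prime factors of r.  For a prime p not dividing Q, a nonzero
   binary quadratic form over F_p has at most two projective roots, and the
   solutions of Q = 0 (mod p) are the lattices {u = t v (mod p)} for the roots
   [t : 1], {v = 0 (mod p)} if [1 : 0] is a root, or p Z^2 if there is no root;
   if p divides Q they are all of Z^2.  On each such lattice M Z^2 we have
   Q (M w) = p Q_M (w) for an integral form Q_M, so Q = 0 (mod p r') on M Z^2
   means Q_M = 0 (mod r'), and the lattices found for Q_M are pushed forward by
   M.  Each prime factor therefore at most doubles the number of lattices. *)

From mathcomp Require Import all_boot all_order all_algebra.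
From mathcomp Require Import ring.
Import Order.TTheory GRing.Theory Num.Theory.

Set Implicit Arguments.
Unset Strict Implicit.
Unset Printing Implicit Defensive.

Definition prime_factors (r : nat) : seq nat :=
  flatten [seq nseq (logn p r) p | p <- primes r].

Lemma all_prime_factors r : all prime (prime_factors r).
Proof.
apply/allP=> q /flatten_mapP[p]; rewrite mem_primes mem_nseq.
by case/andP=> pp _ /andP[_ /eqP->].
Qed.

Lemma size_prime_factors r : size (prime_factors r) = bigOmega r.
Proof.
rewrite size_flatten /shape -map_comp sumnE big_map.
by apply: eq_bigr => p _; rewrite /= size_nseq.
Qed.

Lemma prod_prime_factors r : 0 < r -> \prod_(p <- prime_factors r) p = r.
Proof.
move=> r_gt0; rewrite big_flatten big_map [RHS](prod_prime_decomp r_gt0).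
rewrite prime_decompE big_map; apply: eq_bigr => p _.
by rewrite big_nseq iter_muln_1.
Qed.

Local Open Scope ring_scope.

Definition chart := (int * int * int * int)%type.

Definition chart_app (m : chart) (w : int * int) : int * int :=
  let: (m11, m12, m21, m22) := m in (m11 * w.1 + m12 * w.2, m21 * w.1 + m22 * w.2).

Definition chart_mul (m n : chart) : chart :=
  let: (m11, m12, m21, m22) := m in
  let: (n11, n12, n21, n22) := n in
  (m11 * n11 + m12 * n21, m11 * n12 + m12 * n22,
   m21 * n11 + m22 * n21, m21 * n12 + m22 * n22).

Definition id_chart : chart := (1, 0, 0, 1).

Definition in_image (m : chart) (x : int * int) : Prop := exists w, x = chart_app m w.

Lemma chart_app_mul m n w : chart_app (chart_mul m n) w = chart_app m (chart_app n w).
Proof. by case: m n w => [[[? ?] ?] ?] [[[? ?] ?] ?] [? ?] /=; congr pair; ring. Qed.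

Lemma in_image_id x : in_image id_chart x.
Proof. by exists x; case: x => u v /=; congr pair; ring. Qed.

Lemma in_image_mul m n x :
  in_image (chart_mul m n) x <-> exists2 y, in_image n y & x = chart_app m y.
Proof.
split=> [[w ->]|[_ [w ->] ->]]; last by exists w; rewrite chart_app_mul.
by exists (chart_app n w); [exists w | rewrite chart_app_mul].
Qed.

Lemma is_lattice_image m : is_lattice (fun u v => in_image m (u, v)).
Proof.
case: m => [[[m11 m12] m21] m22]; split.
  by exists (0, 0); congr pair => /=; ring.
move=> u1 v1 u2 v2 [[x1 y1] [-> ->]] [[x2 y2] [-> ->]].
by exists (x1 - x2, y1 - y2); congr pair => /=; ring.
Qed.

Definition bqf := (int * int * int)%type.

Definition bqf_val (Q : bqf) (x : int * int) : int :=
  let: (a, b, c) := Q in qform a b c x.1 x.2.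

Definition bqf_comp (Q : bqf) (m : chart) : bqf :=
  let: (a, b, c) := Q in
  let: (m11, m12, m21, m22) := m in
  (qform a b c m11 m21,
   2 * a * m11 * m12 + b * (m11 * m22 + m12 * m21) + 2 * c * m21 * m22,
   qform a b c m12 m22).

Lemma bqf_val_comp Q m w : bqf_val (bqf_comp Q m) w = bqf_val Q (chart_app m w).
Proof. by case: Q m w => [[a b] c] [[[? ?] ?] ?] [? ?]; rewrite /= /qform; ring. Qed.

Definition dvd_bqf (d : int) (Q : bqf) : bool :=
  let: (a, b, c) := Q in [&& (d %| a)%Z, (d %| b)%Z & (d %| c)%Z].

Definition bqf_divz (Q : bqf) (d : int) : bqf :=
  let: (a, b, c) := Q in ((a %/ d)%Z, (b %/ d)%Z, (c %/ d)%Z).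

Lemma dvd_bqfP d Q : reflect (forall x, (d %| bqf_val Q x)%Z) (dvd_bqf d Q).
Proof.
case: Q => [[a b] c]; apply: (iffP and3P) => [[da db dc] [u v]|dQ].
  by rewrite /= /qform -!mulrA !rpredD ?dvdz_mulr.
have da : (d %| a)%Z by have := dQ (1, 0); rewrite /= /qform; congr (_ %| _)%Z; ring.
have dc : (d %| c)%Z by have := dQ (0, 1); rewrite /= /qform; congr (_ %| _)%Z; ring.
split=> //; have := dQ (1, 1).
have -> : bqf_val (a, b, c) (1, 1) = b + (a + c) by rewrite /= /qform; ring.
by rewrite rpredDr // rpredD.
Qed.

Lemma bqf_val_divz d Q x : dvd_bqf d Q -> bqf_val Q x = d * bqf_val (bqf_divz Q d) x.
Proof.
case: Q => [[a b] c] /and3P[da db dc] /=.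
by rewrite -{1}(divzK da) -{1}(divzK db) -{1}(divzK dc) /qform; ring.
Qed.

Section PrimeCharts.

Variable p : nat.
Hypothesis p_pr : prime p.

Lemma dvdz_primeM x y : (p %| x * y)%Z = (p %| x)%Z || (p %| y)%Z.
Proof. by rewrite !dvdzE abszM Euclid_dvdM. Qed.

Lemma small_dvdz_sub_eq i j : (i < p)%N -> (j < p)%N -> (p %| i%:Z - j%:Z)%Z -> i = j.
Proof. by move=> ip jp; rewrite -eqz_mod_dvd !modz_nat !modn_small // => /eqP[]. Qed.

Lemma bqf_val_line a b c t u v :
  bqf_val (a, b, c) (u, v) =
  (u - t * v) * (a * (u + t * v) + b * v) + v ^+ 2 * bqf_val (a, b, c) (t, 1).
Proof. by rewrite /= /qform; ring. Qed.

Definition bqf_roots (Q : bqf) : seq nat :=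
  [seq t <- iota 0 p | (p %| bqf_val Q (t%:Z, 1))%Z].

Lemma mem_bqf_roots Q t :
  (t \in bqf_roots Q) = (t < p)%N && (p %| bqf_val Q (t%:Z, 1))%Z.
Proof. by rewrite mem_filter mem_iota andbC. Qed.

Lemma two_roots_dvdz a b c t1 t2 : (t1 < p)%N -> (t2 < p)%N -> t1 != t2 ->
  (p %| bqf_val (a, b, c) (t1%:Z, 1))%Z -> (p %| bqf_val (a, b, c) (t2%:Z, 1))%Z ->
  (p %| a * (t1%:Z + t2%:Z) + b)%Z.
Proof.
move=> t1p t2p t12 r1 r2.
have : (p %| (t1%:Z - t2%:Z) * (a * (t1%:Z + t2%:Z) + b))%Z.
  have -> : (t1%:Z - t2%:Z) * (a * (t1%:Z + t2%:Z) + b) =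
            bqf_val (a, b, c) (t1%:Z, 1) - bqf_val (a, b, c) (t2%:Z, 1).
    by rewrite /= /qform; ring.
  by rewrite rpredB.
rewrite dvdz_primeM => /orP[/(small_dvdz_sub_eq t1p t2p)/eqP|//].
by rewrite (negbTE t12).
Qed.

Lemma two_roots_dvd_bqf a b c t1 t2 : (t1 < p)%N -> (t2 < p)%N -> t1 != t2 ->
  (p %| bqf_val (a, b, c) (t1%:Z, 1))%Z -> (p %| bqf_val (a, b, c) (t2%:Z, 1))%Z ->
  (p %| a)%Z -> dvd_bqf p (a, b, c).
Proof.
move=> t1p t2p t12 r1 r2 pa; have pb : (p %| b)%Z.
  rewrite -(rpredDl _ (dvdz_mulr (t1%:Z + t2%:Z) pa)).
  exact: (two_roots_dvdz t1p t2p t12 r1 r2).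
apply/and3P; split=> //.
have -> : c = bqf_val (a, b, c) (t1%:Z, 1) - (a * t1%:Z ^+ 2 + b * t1%:Z).
  by rewrite /= /qform; ring.
by rewrite rpredB // rpredD // dvdz_mulr.
Qed.

Lemma three_roots_dvdz_lead a b c t1 t2 t3 :
  (t1 < p)%N -> (t2 < p)%N -> (t3 < p)%N -> t1 != t2 -> t1 != t3 -> t2 != t3 ->
  (p %| bqf_val (a, b, c) (t1%:Z, 1))%Z -> (p %| bqf_val (a, b, c) (t2%:Z, 1))%Z ->
  (p %| bqf_val (a, b, c) (t3%:Z, 1))%Z -> (p %| a)%Z.
Proof.
move=> t1p t2p t3p t12 t13 t23 r1 r2 r3.
have : (p %| a * (t2%:Z - t3%:Z))%Z.
  have -> : a * (t2%:Z - t3%:Z) =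
            (a * (t1%:Z + t2%:Z) + b) - (a * (t1%:Z + t3%:Z) + b) by ring.
  by rewrite rpredB // (two_roots_dvdz t1p _ _ r1).
rewrite dvdz_primeM => /orP[//|/(small_dvdz_sub_eq t2p t3p)/eqP].
by rewrite (negbTE t23).
Qed.

Lemma size_bqf_roots Q : ~~ dvd_bqf p Q ->
  (size (bqf_roots Q) + (p %| bqf_val Q (1, 0))%Z <= 2)%N.
Proof.
case: Q => [[a b] c] nQ.
have -> : bqf_val (a, b, c) (1, 0) = a by rewrite /= /qform; ring.
have := filter_uniq (fun t => (p %| bqf_val (a, b, c) (t%:Z, 1))%Z) (iota_uniq 0 p).
have := mem_bqf_roots (a, b, c); rewrite /bqf_roots.
case: (filter _ _) => [|t1 [|t2 [|t3 s]]] mem //=; try by case: (p %| a)%Z.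
- rewrite inE andbT => t12.
  move: (mem t1) (mem t2); rewrite !inE !eqxx orbT.
  move=> /esym/andP[t1p r1] /esym/andP[t2p r2].
  case pa: (p %| a)%Z => //.
  by rewrite (two_roots_dvd_bqf t1p t2p t12 r1 r2 pa) in nQ.
- rewrite !inE !negb_or => /and4P[/and3P[t12 t13 _] /andP[t23 _] _ _].
  move: (mem t1) (mem t2) (mem t3); rewrite !inE !eqxx !orbT.
  move=> /esym/andP[t1p r1] /esym/andP[t2p r2] /esym/andP[t3p r3].
  have pa := three_roots_dvdz_lead t1p t2p t3p t12 t13 t23 r1 r2 r3.
  by rewrite (two_roots_dvd_bqf t1p t2p t12 r1 r2 pa) in nQ.
Qed.

Lemma bqf_val_axis a b c u v :
  bqf_val (a, b, c) (u, v) = u ^+ 2 * bqf_val (a, b, c) (1, 0) + v * (b * u + c * v).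
Proof. by rewrite /= /qform; ring. Qed.

Lemma exists_slope u v : ~~ (p %| v)%Z -> exists2 t, (t < p)%N & (p %| u - t%:Z * v)%Z.
Proof.
move=> pv; have p_gt0 : (0 < p%:Z) by rewrite ltz_nat prime_gt0.
have cpv : coprimez p v by rewrite coprimezE prime_coprime.
have [[x y] /= xy] := coprimezP _ _ cpv.
have r_ge0 : 0 <= ((u * y) %% p)%Z by rewrite modz_ge0 // gt_eqF.
exists (absz ((u * y) %% p)%Z); first by rewrite -ltz_nat gez0_abs // ltz_pmod.
rewrite gez0_abs //; apply/dvdzP; exists (u * x + ((u * y) %/ p)%Z * v).
by rewrite /modz -[u in u - _]mulr1 -xy; ring.
Qed.

Definition line_chart (t : nat) : chart := (t%:Z, p%:Z, 1, 0).
Definition axis_chart : chart := (1, 0, 0, p%:Z).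
Definition scalar_chart : chart := (p%:Z, 0, 0, p%:Z).

Lemma in_line_chart t u v : in_image (line_chart t) (u, v) <-> (p %| u - t%:Z * v)%Z.
Proof.
split=> [[[w1 w2] [-> ->]]|/dvdzP[k /eqP]]; first by apply/dvdzP; exists w2; ring.
by rewrite subr_eq => /eqP->; exists (v, k); congr pair => /=; ring.
Qed.

Lemma in_axis_chart u v : in_image axis_chart (u, v) <-> (p %| v)%Z.
Proof.
split=> [[[w1 w2] [_ ->]]|/dvdzP[k ->]]; first by apply/dvdzP; exists w2; ring.
by exists (u, k); congr pair => /=; ring.
Qed.

Lemma in_scalar_chart u v :
  in_image scalar_chart (u, v) <-> (p %| u)%Z /\ (p %| v)%Z.
Proof.
split=> [[[w1 w2] [-> ->]]|[/dvdzP[k ->] /dvdzP[l ->]]].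
  by split; apply/dvdzP; [exists w1 | exists w2]; ring.
by exists (k, l); congr pair => /=; ring.
Qed.

Definition root_charts (Q : bqf) : seq chart :=
  [seq line_chart t | t <- bqf_roots Q] ++
  (if (p %| bqf_val Q (1, 0))%Z then [:: axis_chart] else [::]).

Definition prime_charts (Q : bqf) : seq chart :=
  if dvd_bqf p Q then [:: id_chart]
  else if root_charts Q is [::] then [:: scalar_chart] else root_charts Q.

Lemma size_prime_charts Q : (size (prime_charts Q) <= 2)%N.
Proof.
rewrite /prime_charts; case: ifP => // /negbT/size_bqf_roots.
case E: (root_charts Q) => [|m s] //.
by rewrite -E size_cat size_map; case: (p %| _)%Z.
Qed.

Lemma scalar_chart_sound Q x : in_image scalar_chart x -> (p %| bqf_val Q x)%Z.
Proof.
case: Q x => [[a b] c] [u v] /in_scalar_chart[pu pv].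
by rewrite bqf_val_axis rpredD // dvdz_mulr // expr2 dvdz_mulr.
Qed.

Lemma root_charts_sound Q m x :
  m \in root_charts Q -> in_image m x -> (p %| bqf_val Q x)%Z.
Proof.
case: Q x => [[a b] c] [u v]; rewrite mem_cat => /orP[/mapP[t + ->]|].
  rewrite mem_bqf_roots => /andP[_ rt] /in_line_chart ut.
  by rewrite (bqf_val_line _ _ _ t%:Z) rpredD ?(dvdz_mulr _ ut) ?dvdz_mull.
case: ifP => // pa; rewrite inE => /eqP-> /in_axis_chart pv.
by rewrite bqf_val_axis rpredD ?(dvdz_mull _ pa) ?dvdz_mulr.
Qed.

Lemma scalar_chart_sub_root_charts Q m x :
  in_image scalar_chart x -> m \in root_charts Q -> in_image m x.
Proof.
case: x => u v /in_scalar_chart[pu pv]; rewrite mem_cat => /orP[/mapP[t _ ->]|].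
  by apply/in_line_chart; rewrite rpredB // dvdz_mull.
by case: ifP => // _; rewrite inE => /eqP->; apply/in_axis_chart.
Qed.

Lemma root_charts_complete Q x : (p %| bqf_val Q x)%Z ->
  (exists2 m, m \in root_charts Q & in_image m x) \/ in_image scalar_chart x.
Proof.
case: Q x => [[a b] c] [u v] pQ; have [pv|pv] := boolP (p %| v)%Z.
  move: pQ; rewrite bqf_val_axis (rpredDr _ (dvdz_mulr _ pv)).
  rewrite dvdz_primeM expr2 dvdz_primeM orbb => /orP[pu|pa].
    by right; apply/in_scalar_chart.
  left; exists axis_chart; last exact/in_axis_chart.
  by rewrite mem_cat pa mem_seq1 eqxx orbT.
have [t tp ut] := exists_slope u pv.
have rt : (p %| bqf_val (a, b, c) (t%:Z, 1))%Z.
  move: pQ; rewrite (bqf_val_line _ _ _ t%:Z) (rpredDl _ (dvdz_mulr _ ut)).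
  by rewrite dvdz_primeM expr2 dvdz_primeM orbb (negbTE pv).
left; exists (line_chart t); last exact/in_line_chart.
by rewrite mem_cat map_f // mem_bqf_roots tp rt.
Qed.

Lemma prime_charts_spec Q x :
  (p %| bqf_val Q x)%Z <-> exists2 m, m \in prime_charts Q & in_image m x.
Proof.
rewrite /prime_charts; case: ifP => [/dvd_bqfP dQ|_].
  by split=> // _; exists id_chart; rewrite ?mem_seq1 //; apply: in_image_id.
case E: (root_charts Q) => [|m0 s]; split.
- case/root_charts_complete=> [[m]|]; first by rewrite E.
  by exists scalar_chart; rewrite ?mem_seq1.
- by case=> m; rewrite mem_seq1 => /eqP->; apply: scalar_chart_sound.
- case/root_charts_complete=> [[m mQ xm]|sx]; first by exists m; rewrite // -E.
  exists m0; first exact: mem_head.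
  by apply: (@scalar_chart_sub_root_charts Q _ _ sx); rewrite E mem_head.
- by case=> m; rewrite -E; apply: root_charts_sound.
Qed.

End PrimeCharts.

Fixpoint lattice_charts (ps : seq nat) (Q : bqf) : seq chart :=
  if ps is p :: ps' then
    [seq chart_mul m n | m <- prime_charts p Q,
                         n <- lattice_charts ps' (bqf_divz (bqf_comp Q m) p)]
  else [:: id_chart].

Lemma bqf_val_prime_chart p Q m w : prime p -> m \in prime_charts p Q ->
  bqf_val Q (chart_app m w) = p%:Z * bqf_val (bqf_divz (bqf_comp Q m) p) w.
Proof.
move=> pp mQ; rewrite -bqf_val_comp; apply: bqf_val_divz.
apply/dvd_bqfP=> y; rewrite bqf_val_comp.
by apply/(prime_charts_spec pp); exists m => //; exists y.
Qed.

Lemma lattice_charts_spec ps : all prime ps -> forall Q x,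
  ((\prod_(p <- ps) p)%N%:Z %| bqf_val Q x)%Z <->
  exists2 m, m \in lattice_charts ps Q & in_image m x.
Proof.
elim: ps => [_ Q x|p ps IH /andP[pp /IH {}IH] Q x] /=.
  rewrite big_nil; split=> // _.
  by exists id_chart; rewrite ?mem_seq1 //; apply: in_image_id.
have p_neq0 : p%:Z != 0 by rewrite eqz_nat -lt0n prime_gt0.
rewrite big_cons PoszM; split.
- move=> dx; have := dvdz_trans (dvdz_mulr _ (dvdzz _)) dx.
  case/(prime_charts_spec pp)=> m mQ [y xy].
  move: dx; rewrite xy (bqf_val_prime_chart _ pp mQ) dvdz_mul2l // => /IH[n nQ yn].
  exists (chart_mul m n); first by apply/allpairsPdep; exists m, n.
  by apply/in_image_mul; exists y.
- case=> _ /allpairsPdep[m [n [mQ nQ ->]]] /in_image_mul[y yn ->].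
  by rewrite (bqf_val_prime_chart _ pp mQ) dvdz_mul2l //; apply/IH; exists n.
Qed.

Lemma size_lattice_charts ps Q : all prime ps ->
  (size (lattice_charts ps Q) <= 2 ^ size ps)%N.
Proof.
elim: ps Q => [|p ps IH] Q //= /andP[pp aps].
rewrite size_allpairs_dep sumnE big_map expnS.
apply: (@leq_trans (\sum_(m <- prime_charts p Q) 2 ^ size ps)).
  by apply: leq_sum => m _; apply: IH.
rewrite big_const_seq count_predT iter_addn_0 mulnC leq_mul2r.
by rewrite size_prime_charts ?orbT.
Qed.

Theorem lemma6 (a b c : int) (r : nat) (hr : (0 < r)%N) :
  exists (N : nat) (L : 'I_N -> int -> int -> Prop),
    (N <= 2 ^ bigOmega r)%N /\
    (forall n, is_lattice (L n)) /\
    (forall u v : int,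
        (r%:Z %| qform a b c u v)%Z <-> exists n, L n u v).
Proof.
have aps := all_prime_factors r.
set s := lattice_charts (prime_factors r) (a, b, c).
exists (size s), (fun n u v => in_image (nth id_chart s n) (u, v)); split.
  by rewrite -size_prime_factors size_lattice_charts.
split=> [n|u v]; first exact: is_lattice_image.
change (qform a b c u v) with (bqf_val (a, b, c) (u, v)).
rewrite -[in (r%:Z %| _)%Z](prod_prime_factors hr) lattice_charts_spec //.
split=> [[m /(nthP id_chart)[i ilt <-] xm]|[i xm]]; first by exists (Ordinal ilt).
by exists (nth id_chart s i); rewrite ?mem_nth.
Qed.
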